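(* Let $\rho>0$ and $y\in\mathbb{R}^n$. There exists a neighborhood $\mathcal Y$ of $y$ such that for all $u\in\mathcal Y$: \[ \mathcal K_{\mathcal D}(P_yu-\rho w)\subseteq\mathcal K_{\mathcal D}(P_yy-\rho w),\quad \mathcal Q_{\mathcal D}(P_yu-\rho w)\subseteq\mathcal Q_{\mathcal D}(P_yy-\rho w),\quad \mathcal Q_{S_\rho}(u)\subseteq\mathcal Q_{S_\rho}(y), \] and \[ \Pi_{\mathcal D}(P_yu-\rho w)=\Pi_{\mathcal D}(P_yy-\rho w)+\widehat Q P_y(u-y)\ \ \forall \widehat Q\in\mathcal Q_{\mathcal D}(P_yu-\rho w), \qquad S_\rho(u)=S_\rho(y)+Q(u-y)\ \ \forall Q\in\mathcal Q_{S_\rho}(u). \]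
   Context: $w\in\mathbb{R}^n$, $w_k=n-2k+1$. $\mathcal D:=\{x\in\mathbb{R}^n: x_1\ge\cdots\ge x_n\}$, $\Pi_{\mathcal D}$ the Euclidean projection onto $\mathcal D$. $B\in\mathbb{R}^{(n-1)\times n}$ with $Bx=(x_1-x_2,\dots,x_{n-1}-x_n)^T$; $B_i$ its $i$-th row and $B_K$ the rows indexed by $K$. $S_\rho(y):=\operatorname{argmin}_x\{\tfrac12\|x-y\|^2+\rho\sum_{i<j}|x_i-x_j|\}$. For each $y\in\mathbb{R}^n$, $P_y$ is a fixed permutation matrix such that $P_yy$ has non-increasing components. For $v\in\mathbb{R}^n$: $\mathcal M_{\mathcal D}(v)$ is the set of $\lambda\in\mathbb{R}^{n-1}$ with $\Pi_{\mathcal D}(v)-v+B^T\lambda=0$, $B\Pi_{\mathcal D}(v)\ge0$, $\lambda\le0$, $\lambda^TB\Pi_{\mathcal D}(v)=0$; $\mathcal I_{\mathcal D}(v):=\{i\in\{1,\dots,n-1\}: B_i\Pi_{\mathcal D}(v)=0\}$; $\mathcal K_{\mathcal D}(v):=\{K\subseteq\{1,\dots,n-1\}: \exists\lambda\in\mathcal M_{\mathcal D}(v)\text{ with }\mathrm{supp}(\lambda)\subseteq K\subseteq\mathcal I_{\mathcal D}(v),\ B_K\text{ has full row rank}\}$; $\mathcal Q_{\mathcal D}(v):=\{I_n-B_K^T(B_KB_K^T)^{-1}B_K: K\in\mathcal K_{\mathcal D}(v)\}$. Finally $\mathcal Q_{S_\rho}(y):=\{P_y^T\widehat QP_y:\widehat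 Q\in\mathcal Q_{\mathcal D}(P_yy-\rho w)\}$. *)

From HB Require Import structures.
From mathcomp Require Import all_boot all_order all_algebra all_fingroup.
Set Implicit Arguments. Unset Strict Implicit. Unset Printing Implicit Defensive.
Import Order.TTheory GRing.Theory Num.Theory.
Local Open Scope ring_scope.

Section Defs.
Variables (R : realFieldType) (n : nat).

(* w_k = n - 2k + 1 for k = 1..n; with 0-based index i = k-1: n - 2i - 1 *)
Definition wvec : 'cV[R]_n := \col_(i < n) (n%:R - 2 * (i : nat)%:R - 1).

Definition Bmat : 'M[R]_(n.-1, n) :=
  \matrix_(i < n.-1, j < n) (((j : nat) == i)%:R - ((j : nat) == i.+1)%:R).

Definition inD (x : 'cV[R]_n) : Prop :=
  forall i j : 'I_n, (i <= j)%N -> x j 0 <= x i 0.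

Definition sqnorm (x : 'cV[R]_n) : R := \sum_(i < n) x i 0 ^+ 2.

Definition is_projD (proj : 'cV[R]_n -> 'cV[R]_n) : Prop :=
  forall v, inD (proj v) /\
    forall z, inD z -> sqnorm (proj v - v) <= sqnorm (z - v).

Definition Sobj (rho : R) (y x : 'cV[R]_n) : R :=
  2^-1 * sqnorm (x - y) +
  rho * \sum_(i < n) \sum_(j < n | (i < j)%N) `|x i 0 - x j 0|.

Definition is_Srho (rho : R) (S : 'cV[R]_n -> 'cV[R]_n) : Prop :=
  forall y x, Sobj rho y (S y) <= Sobj rho y x.

Definition is_sorting_perm (P : 'cV[R]_n -> 'M[R]_n) : Prop :=
  forall y, is_perm_mx (P y) /\ inD (P y *m y).

Variable proj : 'cV[R]_n -> 'cV[R]_n.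

Definition MD (v : 'cV[R]_n) (lam : 'cV[R]_(n.-1)) : Prop :=
  proj v - v + Bmat^T *m lam = 0 /\
  (forall i, 0 <= (Bmat *m proj v) i 0) /\
  (forall i, lam i 0 <= 0) /\
  lam^T *m (Bmat *m proj v) = 0.

Definition ID (v : 'cV[R]_n) : {set 'I_(n.-1)} :=
  [set i | (Bmat *m proj v) i 0 == 0].

Definition BK (K : {set 'I_(n.-1)}) : 'M[R]_(#|K|, n) :=
  \matrix_(k < #|K|) row (enum_val k) Bmat.

Definition supp (lam : 'cV[R]_(n.-1)) : {set 'I_(n.-1)} :=
  [set i | lam i 0 != 0].

Definition KD (v : 'cV[R]_n) (K : {set 'I_(n.-1)}) : Prop :=
  (exists lam, MD v lam /\ supp lam \subset K) /\
  K \subset ID v /\ row_free (BK K).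

Definition QK (K : {set 'I_(n.-1)}) : 'M[R]_n :=
  1%:M - (BK K)^T *m invmx (BK K *m (BK K)^T) *m BK K.

Definition QD (v : 'cV[R]_n) (Q : 'M[R]_n) : Prop :=
  exists K, KD v K /\ Q = QK K.

Definition QS (P : 'cV[R]_n -> 'M[R]_n) (rho : R) (y : 'cV[R]_n) (Q : 'M[R]_n)
  : Prop :=
  exists Qh, QD (P y *m y - rho *: wvec) Qh /\ Q = (P y)^T *m Qh *m P y.

End Defs.

From HB Require Import structures.
From mathcomp Require Import all_boot all_order all_algebra all_fingroup.
Import Order.TTheory GRing.Theory Num.Theory.
Local Open Scope ring_scope.

From mathcomp Require Import ring lra zify.
Set Implicit Arguments. Unset Strict Implicit. Unset Printing Implicit Defensive.

(* For data sorted by a permutation [P], the fused penalty equals the linear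
   form [<w, .>] on D, so [S y = P^T proj (P y - rho w)].  The multiplier of the
   projection onto D is unique (the prefix sums of [v - proj v]), and together
   with [proj v] it depends continuously on [v]: near [v] the active set can
   only shrink and the support of the multiplier only grow, so [K_D] can only
   shrink.  For a common [K], subtracting the two KKT systems gives
   [proj v - proj v' = Q_K (v - v')].  Finally, near [y] every sorting
   permutation of [u] also sorts [y], hence differs from [P_y] by a permutation
   fixing [P_y y]; as [rho > 0], every tie of [P_y y] carries a nonzero
   multiplier, so it lies in [K], and [Q_K] commutes with such permutations. *)

Section Dot.
Variables (R : realFieldType) (n : nat).
Local Notation V := 'cV[R]_n.

Definition dot (x y : V) : R := \sum_i x i 0 * y i 0.

Lemma sqnormE (x : V) : sqnorm x = dot x x.
Proof. by apply: eq_bigr => i _; rewrite expr2. Qed.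

Lemma dotC (x y : V) : dot x y = dot y x.
Proof. by apply: eq_bigr => i _; rewrite mulrC. Qed.

Lemma dotDl (x y z : V) : dot (x + y) z = dot x z + dot y z.
Proof. by rewrite /dot -big_split; apply: eq_bigr => i _; rewrite mxE mulrDl. Qed.

Lemma dotNl (x z : V) : dot (- x) z = - dot x z.
Proof. by rewrite /dot -sumrN; apply: eq_bigr => i _; rewrite mxE mulNr. Qed.

Lemma dotBl (x y z : V) : dot (x - y) z = dot x z - dot y z.
Proof. by rewrite dotDl dotNl. Qed.

Lemma dotZl (a : R) (x z : V) : dot (a *: x) z = a * dot x z.
Proof. by rewrite /dot mulr_sumr; apply: eq_bigr => i _; rewrite mxE mulrA. Qed.

Lemma dotDr (x y z : V) : dot z (x + y) = dot z x + dot z y.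
Proof. by rewrite !(dotC z) dotDl. Qed.

Lemma dotNr (x z : V) : dot z (- x) = - dot z x.
Proof. by rewrite !(dotC z) dotNl. Qed.

Lemma dotBr (x y z : V) : dot z (x - y) = dot z x - dot z y.
Proof. by rewrite !(dotC z) dotBl. Qed.

Lemma dotZr (a : R) (x z : V) : dot z (a *: x) = a * dot z x.
Proof. by rewrite !(dotC z) dotZl. Qed.

Lemma dot_ge0 (x : V) : 0 <= dot x x.
Proof. by apply: sumr_ge0 => i _; rewrite -expr2 sqr_ge0. Qed.

Lemma sqr_entry_le_dot (x : V) i : x i 0 ^+ 2 <= dot x x.
Proof.
rewrite -sqnormE /sqnorm (bigD1 i) //= lerDl.
by apply: sumr_ge0 => k _; rewrite sqr_ge0.
Qed.

Lemma dot_eq0 (x : V) : dot x x = 0 -> x = 0.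
Proof.
move=> x0; apply/matrixP => i j; rewrite (ord1 j) mxE.
apply/eqP; rewrite -sqrf_eq0 eq_le sqr_ge0 andbT -x0.
exact: sqr_entry_le_dot.
Qed.

Lemma dot_le_entries (x : V) c :
  (forall j, `|x j 0| < c) -> dot x x <= n%:R * c ^+ 2.
Proof.
move=> xc; rewrite -sqnormE /sqnorm.
have -> : n%:R * c ^+ 2 = \sum_(j < n) c ^+ 2 by rewrite sumr_const card_ord mulr_natl.
by apply: ler_sum => j _; move: (xc j); rewrite ltr_norml => /andP [? ?]; nra.
Qed.

Lemma dot_self_le_of_le_dot (d e : V) : dot d d <= dot e d -> dot d d <= dot e e.
Proof.
move=> de; have := dot_ge0 (e - d).
rewrite !dotBl !dotBr (dotC d e); lra.
Qed.

End Dot.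

Section Projection.
Variables (R : realFieldType) (n : nat).
Local Notation V := 'cV[R]_n.

Lemma inD_segment (x z : V) t : inD x -> inD z -> 0 <= t -> t <= 1 ->
  inD (x + t *: (z - x)).
Proof.
move=> Dx Dz t0 t1 i j ij; rewrite !mxE.
have := Dx i j ij; have := Dz i j ij; nra.
Qed.

Lemma dot_addZ (a d : V) t :
  dot (a + t *: d) (a + t *: d) = dot a a + 2 * t * dot a d + t ^+ 2 * dot d d.
Proof. rewrite !dotDl !dotDr !dotZl !dotZr (dotC d a); ring. Qed.

Lemma ge0_of_quadratic_ge0 (a b : R) : 0 <= b ->
  (forall t, 0 < t -> t <= 1 -> 0 <= 2 * t * a + t ^+ 2 * b) -> 0 <= a.
Proof.
move=> b0 quad_ge0; rewrite leNgt; apply/negP => a0.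
have ba0 : 0 < b - a by lra.
pose t := - a / (b - a).
have tE : t * (b - a) = - a by rewrite /t mulfVK // gt_eqF.
have t0 : 0 < t by rewrite /t divr_gt0 // oppr_gt0.
have t1 : t <= 1 by rewrite /t ler_pdivrMr // mul1r; lra.
have := quad_ge0 t t0 t1; nra.
Qed.

Variable proj : V -> V.
Hypothesis projP : is_projD proj.

Lemma projD_inD v : inD (proj v).
Proof. by case: (projP v). Qed.

(* Compare [proj v] with the points [proj v + t (z - proj v)] of D. *)
Lemma projD_variational v z : inD z -> dot (v - proj v) (z - proj v) <= 0.
Proof.
move=> Dz; set x := proj v; set d := z - x.
suff : 0 <= dot (x - v) d by rewrite -opprB dotNl; lra.
apply: (ge0_of_quadratic_ge0 (dot_ge0 d)) => t t0 t1.
have := (projP v).2 _ (inD_segment (projD_inD v) Dz (ltW t0) t1).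
rewrite !sqnormE -/x (addrAC x) -/d dot_addZ; lra.
Qed.

Lemma projD_nonexpansive a b :
  dot (proj a - proj b) (proj a - proj b) <= dot (a - b) (a - b).
Proof.
apply: dot_self_le_of_le_dot.
have := projD_variational a (projD_inD b).
have := projD_variational b (projD_inD a).
rewrite !dotBl !dotBr !(dotC (proj a)) !(dotC (proj b)); lra.
Qed.

End Projection.

Section DifferenceMatrix.
Variables (R : realFieldType) (n : nat).
Local Notation V := 'cV[R]_n.
Local Notation W := 'cV[R]_(n.-1).
Local Notation B := (Bmat R n).

Definition idx_lo (i : 'I_(n.-1)) : 'I_n := Ordinal (leq_trans (ltn_ord i) (leq_pred n)).

Lemma idx_hi_proof (i : 'I_(n.-1)) : (i.+1 < n)%N.
Proof. have := ltn_ord i; lia. Qed.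
Definition idx_hi (i : 'I_(n.-1)) : 'I_n := Ordinal (idx_hi_proof i).

Lemma sum_delta (x : V) (k : 'I_n) :
  \sum_(j < n) ((j : nat) == k)%:R * x j 0 = x k 0.
Proof.
rewrite (bigD1 k) //= eqxx mul1r big1 ?addr0 // => j /negbTE.
by rewrite val_eqE => ->; rewrite mul0r.
Qed.

Lemma Bmat_mulE (x : V) (i : 'I_(n.-1)) :
  (B *m x) i 0 = x (idx_lo i) 0 - x (idx_hi i) 0.
Proof.
rewrite mxE -(sum_delta x (idx_lo i)) -(sum_delta x (idx_hi i)) -sumrB.
by apply: eq_bigr => j _; rewrite mxE mulrBl.
Qed.

(* [lam_at l k] is [l_k], extended by [0] outside [0 <= k < n - 1]. *)
Definition lam_at (l : W) (k : nat) : R := \sum_(i < n.-1 | (i : nat) == k) l i 0.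
Definition lam_prev (l : W) (k : nat) : R := if k is k'.+1 then lam_at l k' else 0.

Lemma lam_atE (l : W) (i : 'I_(n.-1)) : lam_at l i = l i 0.
Proof.
rewrite /lam_at (bigD1 i) //= big1 ?addr0 // => j /andP [/eqP ji /negP]; case.
exact/eqP/val_inj.
Qed.

Lemma lam_at_out (l : W) k : (n.-1 <= k)%N -> lam_at l k = 0.
Proof.
move=> nk; rewrite /lam_at big1 // => j /eqP jk.
by have := ltn_ord j; rewrite jk; lia.
Qed.

Lemma trBmat_mulE (l : W) (j : 'I_n) : (B^T *m l) j 0 = lam_at l j - lam_prev l j.
Proof.
rewrite mxE.
rewrite (eq_bigr (fun i : 'I_(n.-1) =>
  ((j : nat) == i)%:R * l i 0 - ((j : nat) == i.+1)%:R * l i 0)); last first.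
  by move=> i _; rewrite !mxE mulrBl.
rewrite sumrB; congr (_ - _).
  rewrite /lam_at [RHS]big_mkcond /=; apply: eq_bigr => i _.
  by rewrite eq_sym; case: (_ == _); rewrite ?mul1r ?mul0r.
rewrite /lam_prev; case: (nat_of_ord j) => [|j'].
  by rewrite big1 // => i _; rewrite mul0r.
rewrite /lam_at [RHS]big_mkcond /=; apply: eq_bigr => i _.
by rewrite eqSS eq_sym; case: (_ == _); rewrite ?mul1r ?mul0r.
Qed.

Lemma lam_at_telescope (l : W) k :
  \sum_(j < k.+1) (lam_at l j - lam_prev l j) = lam_at l k.
Proof.
elim: k => [|k IH]; first by rewrite big_ord1 /= subr0.
by rewrite big_ord_recr /= IH addrC subrK.
Qed.

Lemma prefix_trBmat (l : W) (k : nat) : (k < n)%N ->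
  \sum_(j < n | (j <= k)%N) (B^T *m l) j 0 = lam_at l k.
Proof.
move=> kn; rewrite (eq_bigr _ (fun j _ => trBmat_mulE l j)) -lam_at_telescope.
by rewrite [RHS](big_ord_widen n (fun j => lam_at l j - lam_prev l j)).
Qed.

Lemma prefix_sumS (x : V) (j : 'I_n) :
  \sum_(i < n | (i <= j)%N) x i 0 = \sum_(i < n | (i < j)%N) x i 0 + x j 0.
Proof.
rewrite (bigD1 j) //= addrC; congr (_ + _); apply: eq_bigl => i.
by rewrite ltn_neqAle val_eqE andbC.
Qed.

Lemma eq_col_of_prefix_sums (a b : V) :
  (forall k, (k < n)%N ->
    \sum_(j < n | (j <= k)%N) a j 0 = \sum_(j < n | (j <= k)%N) b j 0) ->
  a = b.
Proof.
move=> ab; apply/matrixP => j c; rewrite (ord1 c).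
have E (x : V) : x j 0 = \sum_(i < n | (i <= j)%N) x i 0 - \sum_(i < n | (i < j)%N) x i 0.
  by rewrite prefix_sumS addrC addKr.
rewrite (E a) (E b) ab //; congr (_ - _).
case jE: (nat_of_ord j) => [|j']; first by rewrite !big_pred0 // => i; rewrite ltn0.
have j'n : (j' < n)%N by have := ltn_ord j; lia.
have ltS (i : 'I_n) : (i < j'.+1)%N = (i <= j')%N by rewrite ltnS.
by rewrite (eq_bigl _ _ ltS) [RHS](eq_bigl _ _ ltS) ab.
Qed.

End DifferenceMatrix.

Section Multiplier.
Variables (R : realFieldType) (n : nat).
Local Notation V := 'cV[R]_n.
Local Notation W := 'cV[R]_(n.-1).
Local Notation B := (Bmat R n).
Variable proj : V -> V.
Hypothesis projP : is_projD proj.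

Definition prefix_ind (k : nat) : V := \col_j ((j <= k)%N)%:R.

Lemma dot_prefix_ind (x : V) k :
  dot x (prefix_ind k) = \sum_(j < n | (j <= k)%N) x j 0.
Proof.
rewrite /dot [RHS]big_mkcond; apply: eq_bigr => j _; rewrite mxE.
by case: (_ <= _)%N; rewrite ?mulr1 ?mulr0.
Qed.

Lemma inD_add_prefix_ind (x : V) k c : inD x -> 0 <= c -> inD (x + c *: prefix_ind k).
Proof.
move=> Dx c0 i j ij; rewrite !mxE; have := Dx i j ij.
case: (leqP j k) => jk; first by rewrite (leq_trans ij jk) /=; lra.
by case: (i <= k)%N => /=; lra.
Qed.

Lemma inD_add_const (x : V) c : inD x -> inD (x + c *: prefix_ind n).
Proof.
move=> Dx i j ij; rewrite !mxE; have := Dx i j ij.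
by rewrite (ltnW (ltn_ord i)) (ltnW (ltn_ord j)) /=; lra.
Qed.

Definition multD (v : V) : W :=
  \col_i \sum_(j < n | (j <= i)%N) (v j 0 - proj v j 0).

Lemma multDE (v : V) (i : 'I_(n.-1)) :
  multD v i 0 = dot (v - proj v) (prefix_ind i).
Proof. by rewrite dot_prefix_ind mxE; apply: eq_bigr => j _; rewrite !mxE. Qed.

Lemma projD_variational_add v d : inD (proj v + d) -> dot (v - proj v) d <= 0.
Proof. by move/(projD_variational projP v); rewrite addrAC subrr add0r. Qed.

Lemma sum_sub_projD (v : V) : \sum_(j < n) (v j 0 - proj v j 0) = 0.
Proof.
have E c : dot (v - proj v) (c *: prefix_ind n) = c * \sum_(j < n) (v j 0 - proj v j 0).
  rewrite dotZr dot_prefix_ind big_mkcond; congr (_ * _); apply: eq_bigr => j _.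
  by rewrite (ltnW (ltn_ord j)) !mxE.
have := projD_variational_add (inD_add_const 1 (projD_inD projP v)).
have := projD_variational_add (inD_add_const (-1) (projD_inD projP v)).
rewrite !E; lra.
Qed.

Lemma multD_le0 (v : V) i : multD v i 0 <= 0.
Proof.
rewrite multDE -[prefix_ind i]scale1r.
exact/projD_variational_add/inD_add_prefix_ind/ler01/projD_inD.
Qed.

Lemma Bmat_projD_ge0 (v : V) i : 0 <= (B *m proj v) i 0.
Proof. by rewrite Bmat_mulE subr_ge0; apply: (projD_inD projP) => /=. Qed.

(* Lowering the first [i + 1] entries of [proj v] by the gap [(B proj v)_i]
   stays in D, which forces the complementarity [multD v i = 0]. *)
Lemma multD_compl (v : V) i : (B *m proj v) i 0 != 0 -> multD v i 0 = 0.
Proof.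
move=> gap_neq0.
have gap_gt0 : 0 < (B *m proj v) i 0 by rewrite lt_def gap_neq0 Bmat_projD_ge0.
set x := proj v in gap_gt0 *; set gap := (B *m x) i 0 in gap_gt0 *.
have gapE : gap = x (idx_lo i) 0 - x (idx_hi i) 0 by rewrite /gap Bmat_mulE.
have Dx : inD x := projD_inD projP v.
have Dz : inD (x + (- gap) *: prefix_ind i).
  move=> a b ab; rewrite !mxE; have := Dx a b ab.
  case: (leqP b i) => bi; first by rewrite (leq_trans ab bi) /=; lra.
  case: (leqP a i) => ai /=; last by lra.
  have : x (idx_hi i) 0 >= x b 0 by apply: Dx => /=.
  have : x a 0 >= x (idx_lo i) 0 by apply: Dx => /=.
  lra.
have := projD_variational_add Dz; rewrite dotZr -multDE.
have := multD_le0 v i; nra.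
Qed.

Lemma trBmat_multD (v : V) : B^T *m multD v = v - proj v.
Proof.
apply: eq_col_of_prefix_sums => k kn; rewrite prefix_trBmat //.
case: (ltnP k n.-1) => kn1.
  have -> : k = Ordinal kn1 by [].
  by rewrite lam_atE mxE; apply: eq_bigr => j _; rewrite !mxE.
rewrite lam_at_out //; symmetry; rewrite -[RHS](sum_sub_projD v) big_mkcond /=.
apply: eq_bigr => j _; have -> : (j <= k)%N by have := ltn_ord j; lia.
by rewrite !mxE.
Qed.

Lemma MD_multD (v : V) : MD proj v (multD v).
Proof.
split; first by rewrite trBmat_multD addrA subrK subrr.
split; first exact: Bmat_projD_ge0.
split; first exact: multD_le0.
apply/matrixP => a b; rewrite (ord1 a) (ord1 b) !mxE big1 // => i _.
rewrite mxE; have [->|gap_neq0] := eqVneq ((B *m proj v) i 0) 0; first by rewrite mulr0.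
by rewrite multD_compl // mul0r.
Qed.

Lemma MD_uniq (v : V) (l : W) : MD proj v l -> l = multD v.
Proof.
move=> [lE _].
have BlE : B^T *m l = v - proj v.
  by apply/eqP; rewrite -opprB -addr_eq0 addrC lE.
apply/matrixP => i j; rewrite (ord1 j) -lam_atE -prefix_trBmat; last exact: ltn_ord (idx_lo i).
by rewrite BlE mxE; apply: eq_bigr => k _; rewrite !mxE.
Qed.

End Multiplier.

Lemma mul_tr_rV_eq0 (R : realFieldType) m (r : 'rV[R]_m) : (r *m r^T) 0 0 = 0 -> r = 0.
Proof.
rewrite mxE => rr0; apply/matrixP => a j; rewrite (ord1 a) mxE.
apply/eqP; rewrite -sqrf_eq0; apply/eqP.
apply: (@psumr_eq0P _ _ predT _ (fun k _ => sqr_ge0 (r 0 k))) => //.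
by rewrite -[RHS]rr0; apply: eq_bigr => k _; rewrite mxE expr2.
Qed.

Lemma row_free_gram_unit (R : realFieldType) m n (A : 'M[R]_(m, n)) :
  row_free A -> A *m A^T \in unitmx.
Proof.
move=> freeA; rewrite -row_free_unit -kermx_eq0; apply/eqP/matrixP => i j.
set r := row i (kermx (A *m A^T)).
have rAAT : r *m (A *m A^T) = 0 by apply/sub_kermxP; exact: row_sub.
have rA : r *m A = 0.
  apply: mul_tr_rV_eq0.
  by rewrite trmx_mul !mulmxA -(mulmxA r) rAAT mul0mx mxE.
have : r = 0 by apply/eqP; rewrite -(mulmx_free_eq0 _ freeA) rA.
by move/matrixP/(_ 0 j); rewrite !mxE.
Qed.

Section ActiveRows.
Variables (R : realFieldType) (n : nat).
Local Notation V := 'cV[R]_n.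
Local Notation W := 'cV[R]_(n.-1).
Local Notation B := (Bmat R n).

Lemma BK_mulE (K : {set 'I_(n.-1)}) (x : V) k :
  (BK R K *m x) k 0 = (B *m x) (enum_val k) 0.
Proof. by rewrite !mxE; apply: eq_bigr => j _; rewrite !mxE. Qed.

Lemma BK_mul_eq0P (K : {set 'I_(n.-1)}) (x : V) :
  reflect (forall i, i \in K -> (B *m x) i 0 = 0) (BK R K *m x == 0).
Proof.
apply: (iffP eqP) => [Kx0 i iK | Kx0].
  move/matrixP: Kx0 => /(_ (enum_rank_in iK i) 0).
  by rewrite BK_mulE enum_rankK_in // => ->; rewrite mxE.
by apply/matrixP => k c; rewrite (ord1 c) BK_mulE Kx0 ?mxE // enum_valP.
Qed.

Definition restr (K : {set 'I_(n.-1)}) (l : W) : 'cV[R]_#|K| :=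
  \col_k l (enum_val k) 0.

Lemma trBmat_restr (K : {set 'I_(n.-1)}) (l : W) :
  supp l \subset K -> B^T *m l = (BK R K)^T *m restr K l.
Proof.
move=> lK; apply/matrixP => j c; rewrite (ord1 c) !mxE.
rewrite (bigID (fun i => i \in K)) /= [X in _ + X]big1 ?addr0; last first.
  move=> i iK; have : i \notin supp l by apply: contra iK; apply: (subsetP lK).
  by rewrite inE negbK => /eqP ->; rewrite mulr0.
rewrite (big_enum_val (fun i => B^T j i * l i 0)) /=.
by apply: eq_bigr => k _; rewrite !mxE.
Qed.

Lemma supp_subB (l l' : W) (K : {set 'I_(n.-1)}) :
  supp l \subset K -> supp l' \subset K -> supp (l - l') \subset K.
Proof.
move=> lK l'K; apply/subsetP => i; rewrite inE !mxE => ll'i.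
have [li0|] := eqVneq (l i 0) 0; last by move=> li; apply: (subsetP lK); rewrite inE.
by apply: (subsetP l'K); rewrite inE; move: ll'i; rewrite li0 sub0r oppr_eq0.
Qed.

Lemma BK_QK (K : {set 'I_(n.-1)}) : row_free (BK R K) -> BK R K *m QK R K = 0.
Proof.
move=> freeK; rewrite /QK mulmxBr mulmx1 !mulmxA.
by rewrite mulmxV ?row_free_gram_unit // mul1mx subrr.
Qed.

Lemma QK_sym (K : {set 'I_(n.-1)}) : (QK R K)^T = QK R K.
Proof.
by rewrite /QK linearB /= trmx1 !trmx_mul trmxK trmx_inv trmx_mul trmxK mulmxA.
Qed.

Variable proj : V -> V.
Hypothesis projP : is_projD proj.

Lemma KD_facts (v : V) K : KD proj v K ->
  [/\ supp (multD proj v) \subset K, BK R K *m proj v = 0 & row_free (BK R K)].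
Proof.
move=> [[l [MDl lK]] [KI freeK]]; split => //; first by rewrite -(MD_uniq MDl).
apply/eqP/BK_mul_eq0P => i iK.
by move/subsetP: KI => /(_ i iK); rewrite inE => /eqP.
Qed.

(* Subtracting the KKT systems of [v] and [v'], both supported on [K]. *)
Lemma projD_sub_QK (v v' : V) K : KD proj v K -> KD proj v' K ->
  proj v - proj v' = QK R K *m (v - v').
Proof.
move=> /KD_facts [vK Kv freeK] /KD_facts [v'K Kv' _].
set A := BK R K in Kv Kv' freeK *.
have vv'E : v - v' = (proj v - proj v') + A^T *m restr K (multD proj v - multD proj v').
  rewrite -trBmat_restr ?supp_subB // mulmxBr !trBmat_multD //.
  by apply/matrixP => i j; rewrite !mxE; ring.
have Aproj : A *m (proj v - proj v') = 0 by rewrite mulmxBr Kv Kv' subrr.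
rewrite vv'E /QK -/A mulmxDr !mulmxBl !mul1mx -!mulmxA Aproj !mulmx0 subr0.
by rewrite [A *m (A^T *m _)]mulmxA mulKmx ?row_free_gram_unit // subrr addr0.
Qed.

End ActiveRows.

Lemma nonzero_norm_lbound (R : realFieldType) (I : finType) (f : I -> R) :
  exists2 m : R, 0 < m & forall i, f i != 0 -> m <= `|f i|.
Proof.
suff [m m0 mf] : exists2 m : R, 0 < m & forall i, i \in enum I -> f i != 0 -> m <= `|f i|.
  by exists m => // i; apply: mf; rewrite mem_enum.
elim: (enum I) => [|a s [m m0 mf]]; first by exists 1.
have [fa0|fa_neq0] := eqVneq (f a) 0.
  exists m => // i; rewrite inE => /orP [/eqP ->|]; first by rewrite fa0 eqxx.
  exact: mf.
exists (Order.min m `|f a|); first by rewrite lt_min m0 normr_gt0.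
move=> i; rewrite inE => /orP [/eqP ->|si] fi; first by rewrite ge_min lexx orbT.
by rewrite ge_min mf.
Qed.

Section LocalStability.
Variables (R : realFieldType) (n : nat).
Local Notation V := 'cV[R]_n.
Local Notation B := (Bmat R n).
Variable proj : V -> V.
Hypothesis projP : is_projD proj.
Variables (a b : V) (c : R).
Hypothesis c_gt0 : 0 < c.
Hypothesis ab_close : forall j, `|a j 0 - b j 0| < c.

Lemma projD_entry_close j : `|proj a j 0 - proj b j 0| < n.+1%:R * c.
Proof.
have := sqr_entry_le_dot (proj a - proj b) j; rewrite !mxE.
have := projD_nonexpansive projP a b.
have : dot (a - b) (a - b) <= n%:R * c ^+ 2.
  by apply: dot_le_entries => k; rewrite !mxE; exact: ab_close.
have : n%:R * c ^+ 2 < (n.+1%:R * c) ^+ 2.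
  by rewrite exprMn -natrX ltr_pM2r ?exprn_gt0 // ltr_nat; nia.
move=> *; rewrite -ltr_sqr ?nnegrE ?normr_ge0 ?mulr_ge0 ?ltW //.
rewrite real_normK ?num_real //; lra.
Qed.

Lemma multD_entry_close i :
  `|multD proj a i 0 - multD proj b i 0| < (n.+2 ^ 2)%:R * c.
Proof.
rewrite !mxE -sumrB; apply: le_lt_trans (ler_norm_sum _ _ _) _.
apply: (@le_lt_trans _ _ (\sum_(j < n) n.+2%:R * c : R)).
  rewrite [X in _ <= X](bigID (fun j : 'I_n => (j <= i)%N)) /=.
  rewrite -[X in X <= _]addr0 lerD ?sumr_ge0 // => [|j _]; last first.
    by rewrite mulr_ge0 ?ler0n ?ltW.
  apply: ler_sum => j _.
  have -> : a j 0 - proj a j 0 - (b j 0 - proj b j 0) =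
            (a j 0 - b j 0) - (proj a j 0 - proj b j 0) by ring.
  apply: le_trans (ler_normB _ _) _; rewrite -[n.+2]addn1 natrD mulrDl mul1r addrC.
  by rewrite lerD ?ltW ?ab_close ?projD_entry_close.
rewrite sumr_const card_ord -[_ *+ n]mulr_natl mulrA -natrM ltr_pM2r //.
by rewrite ltr_nat; nia.
Qed.

Lemma Bmat_projD_close i :
  `|(B *m proj a) i 0 - (B *m proj b) i 0| < (n.+2 ^ 2)%:R * c.
Proof.
rewrite !Bmat_mulE.
have := projD_entry_close (idx_lo i); have := projD_entry_close (idx_hi i).
have : n.+1%:R * c + n.+1%:R * c <= (n.+2 ^ 2)%:R * c.
  by rewrite -mulrDl ler_pM2r // -natrD ler_nat; lia.
rewrite !ltr_norml => ? /andP [? ?] /andP [? ?]; apply/andP; split; lra.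
Qed.

End LocalStability.

(* [c] keeps the perturbations of [B proj v] and [multD v] below their smallest
   nonzero entries. *)
Lemma KD_nbhs (R : realFieldType) n (proj : 'cV[R]_n -> 'cV[R]_n) (v : 'cV[R]_n) :
  is_projD proj ->
  exists2 c : R, 0 < c & forall v' : 'cV[R]_n, (forall j, `|v' j 0 - v j 0| < c) ->
    forall K, KD proj v' K -> KD proj v K.
Proof.
move=> projP.
have [m1 m1_gt0 m1P] := nonzero_norm_lbound (fun i => (Bmat R n *m proj v) i 0).
have [m2 m2_gt0 m2P] := nonzero_norm_lbound (fun i => multD proj v i 0).
set N : R := (n.+2 ^ 2)%:R.
have N_gt0 : 0 < N by rewrite ltr0n expn_gt0.
pose m := Order.min m1 m2.
have [m_gt0 m_le1 m_le2] : [/\ 0 < m, m <= m1 & m <= m2].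
  by rewrite /m lt_min m1_gt0 m2_gt0 !ge_min !lexx ?orbT.
exists (m / N) => [|v' close K [[l [MDl lK]] [KI freeK]]]; first by rewrite divr_gt0.
have Nm : N * (m / N) = m by rewrite mulrC divfK // gt_eqF.
have c_gt0 : 0 < m / N by rewrite divr_gt0.
split; last split => //.
  exists (multD proj v); split; first exact: MD_multD.
  apply/subsetP => i; rewrite inE => lam_neq0; apply: (subsetP lK).
  rewrite inE (MD_uniq MDl); apply: contra_neq lam_neq0 => lam'0.
  have := multD_entry_close projP c_gt0 close i.
  rewrite lam'0 sub0r normrN -/N Nm => lam_lt; apply/eqP.
  by apply: contraTT lam_lt => /m2P m2_le; rewrite -leNgt (le_trans m_le2).
apply/subsetP => i iK; rewrite inE; apply/negPn/negP => gap_neq0.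
have := subsetP KI i iK; rewrite inE => /eqP gap'0.
have := Bmat_projD_close projP c_gt0 close i.
by rewrite gap'0 sub0r normrN -/N Nm; have := m1P i gap_neq0; lra.
Qed.

Lemma sum_ltn_r n i : (\sum_(j < n) (i < j)%N = n - i.+1)%N.
Proof.
elim: n => [|n IH]; first by rewrite big_ord0.
by rewrite big_ord_recr /= IH; case: ltnP; lia.
Qed.

Lemma sum_ltn_l n k : (\sum_(j < n) (j < k)%N = minn n k)%N.
Proof.
elim: n => [|n IH]; first by rewrite big_ord0 min0n.
by rewrite big_ord_recr /= IH; case: ltnP; lia.
Qed.

Section Penalty.
Variables (R : realFieldType) (n : nat).
Local Notation V := 'cV[R]_n.

Lemma perm_mx_mulE (s : {perm 'I_n}) (x : V) i : (perm_mx s *m x) i 0 = x (s i) 0.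
Proof. by rewrite -row_permE mxE. Qed.

Lemma tr_perm_mx_mulK (s : {perm 'I_n}) (x : V) : (perm_mx s)^T *m (perm_mx s *m x) = x.
Proof. by rewrite mulmxA tr_perm_mx -perm_mxM mulVg perm_mx1 mul1mx. Qed.

Lemma perm_mx_mul_trK (s : {perm 'I_n}) (x : V) : perm_mx s *m ((perm_mx s)^T *m x) = x.
Proof. by rewrite mulmxA tr_perm_mx -perm_mxM mulgV perm_mx1 mul1mx. Qed.

Lemma dot_perm (s : {perm 'I_n}) (x y : V) :
  dot (perm_mx s *m x) (perm_mx s *m y) = dot x y.
Proof.
rewrite /dot (reindex_inj (@perm_inj _ s^-1)) /=; apply: eq_bigr => i _.
by rewrite !perm_mx_mulE permKV.
Qed.

Definition penalty (x : V) : R :=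
  \sum_(i < n) \sum_(j < n | (i < j)%N) `|x i 0 - x j 0|.

Lemma SobjE rho (y x : V) : Sobj rho y x = 2^-1 * dot (x - y) (x - y) + rho * penalty x.
Proof. by rewrite /Sobj sqnormE. Qed.

Lemma penalty_all_pairs (x : V) :
  2 * penalty x = \sum_(i < n) \sum_(j < n) `|x i 0 - x j 0|.
Proof.
have split_ij (i : 'I_n) : \sum_(j < n) `|x i 0 - x j 0| =
   \sum_(j < n | (i < j)%N) `|x i 0 - x j 0| + \sum_(j < n | (j < i)%N) `|x i 0 - x j 0|.
  rewrite (bigID (fun j : 'I_n => (i < j)%N)) /=; congr (_ + _).
  rewrite (bigID (fun j : 'I_n => (j < i)%N)) /= [X in _ + X]big1 ?addr0.
    by apply: eq_bigl => j; apply/idP/idP => [/andP []//|ji]; rewrite ji andbT -leqNgt ltnW.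
  move=> j /andP []; rewrite -!leqNgt => ji ij.
  have -> : j = i by apply/val_inj/eqP; rewrite eqn_leq ji ij.
  by rewrite subrr normr0.
rewrite (eq_bigr _ (fun i _ => split_ij i)) big_split /= mulr2n mulrDl mul1r.
congr (_ + _); rewrite /penalty big_mkcond [RHS]big_mkcond /=.
rewrite (eq_bigr (fun i : 'I_n =>
  \sum_(j < n) if (i < j)%N then `|x i 0 - x j 0| else 0)); last by move=> i _; rewrite big_mkcond.
rewrite exchange_big /=; apply: eq_bigr => i _; rewrite [RHS]big_mkcond.
by apply: eq_bigr => j _; case: ifP; rewrite // distrC.
Qed.

Lemma penalty_perm (s : {perm 'I_n}) (x : V) : penalty (perm_mx s *m x) = penalty x.
Proof.
apply: (@mulfI _ 2); first by rewrite pnatr_eq0.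
rewrite !penalty_all_pairs.
rewrite (reindex_inj (@perm_inj _ s^-1)) /=; apply: eq_bigr => i _.
rewrite (reindex_inj (@perm_inj _ s^-1)) /=; apply: eq_bigr => j _.
by rewrite !perm_mx_mulE !permKV.
Qed.

(* On D the penalty is the linear form [<w, .>]: entry [i] appears [n - 1 - i]
   times with sign [+] and [i] times with sign [-]. *)
Lemma penalty_inD (z : V) : inD z -> penalty z = dot (wvec R n) z.
Proof.
move=> Dz.
have pairE (i j : 'I_n) : (if (i < j)%N then `|z i 0 - z j 0| else 0) =
    z i 0 * ((i < j)%N)%:R - z j 0 * ((i < j)%N)%:R.
  case: ltnP => ij; rewrite ?mulr1 ?mulr0 ?subr0 //.
  by rewrite ger0_norm // subr_ge0 Dz // ltnW.
have firstE : \sum_(i < n) \sum_(j < n) z i 0 * ((i < j)%N)%:R =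
    \sum_(i < n) z i 0 * ((n - i.+1)%N)%:R.
  by apply: eq_bigr => i _; rewrite -mulr_sumr -natr_sum sum_ltn_r.
have secondE : \sum_(i < n) \sum_(j < n) z j 0 * ((i < j)%N)%:R =
    \sum_(j < n) z j 0 * (j : nat)%:R.
  rewrite exchange_big /=; apply: eq_bigr => j _; rewrite -mulr_sumr -natr_sum sum_ltn_l.
  by rewrite (minn_idPr (ltnW (ltn_ord j))).
have penE : penalty z = \sum_(i < n) \sum_(j < n) (if (i < j)%N then `|z i 0 - z j 0| else 0).
  by apply: eq_bigr => i _; rewrite big_mkcond.
rewrite penE (eq_bigr _ (fun i _ => eq_bigr _ (fun j _ => pairE i j))).
rewrite (eq_bigr (fun i : 'I_n => \sum_(j < n) z i 0 * ((i < j)%N)%:R -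
  \sum_(j < n) z j 0 * ((i < j)%N)%:R)); last by move=> i _; rewrite sumrB.
rewrite sumrB firstE secondE -sumrB /dot.
apply: eq_bigr => i _; rewrite mxE natrB ?ltn_ord //; ring.
Qed.

Lemma penalty_midpoint (a b : V) :
  penalty (2^-1 *: (a + b)) <= 2^-1 * penalty a + 2^-1 * penalty b.
Proof.
rewrite /penalty !mulr_sumr -big_split; apply: ler_sum => i _.
rewrite !mulr_sumr -big_split; apply: ler_sum => j _; rewrite !mxE.
have -> : 2^-1 * (a i 0 + b i 0) - 2^-1 * (a j 0 + b j 0) =
  2^-1 * (a i 0 - a j 0) + 2^-1 * (b i 0 - b j 0) by ring.
apply: le_trans (ler_normD _ _) _.
by rewrite !normrM ger0_norm // invr_ge0 ler0n.
Qed.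

Lemma Sobj_midpoint rho (y a b : V) : 0 <= rho ->
  Sobj rho y (2^-1 *: (a + b)) <=
  2^-1 * Sobj rho y a + 2^-1 * Sobj rho y b - 8^-1 * dot (a - b) (a - b).
Proof.
move=> rho_ge0; rewrite !SobjE.
have midE : 2^-1 *: (a + b) - y = 2^-1 *: (a - y) + 2^-1 *: (b - y).
  by apply/matrixP => i j; rewrite !mxE; field.
have abE : a - b = (a - y) - (b - y) by rewrite opprB addrA subrK.
have := ler_wpM2l rho_ge0 (penalty_midpoint a b).
rewrite midE abE; move: (a - y) (b - y) => p q.
rewrite !dotDl !dotDr ?dotNl ?dotNr !dotZl !dotZr ?dotNl ?dotNr (dotC q p).
have h2 : (2^-1 : R) * 2 = 1 by rewrite mulVf // pnatr_eq0.
have h8 : (8^-1 : R) * 8 = 1 by rewrite mulVf // pnatr_eq0.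
have h4 : (2^-1 : R) * 2^-1 = 4^-1 by rewrite -invfM -natrM.
lra.
Qed.

End Penalty.

Section Srho.
Variables (R : realFieldType) (n : nat).
Local Notation V := 'cV[R]_n.
Variables (rho : R) (S : V -> V).
Hypothesis SP : is_Srho rho S.
Hypothesis rho_gt0 : 0 < rho.

Lemma Srho_uniq (y x : V) : Sobj rho y x <= Sobj rho y (S y) -> x = S y.
Proof.
move=> xmin; apply/eqP; rewrite -subr_eq0; apply/eqP/dot_eq0/eqP.
rewrite eq_le dot_ge0 andbT.
have := Sobj_midpoint y x (S y) (ltW rho_gt0).
have := SP y (2^-1 *: (x + S y)).
have : (0 : R) < 8^-1 by rewrite invr_gt0 ltr0n.
nra.
Qed.

Lemma dot_tperm (a b : 'I_n) (x y : V) : a != b ->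
  dot (perm_mx (tperm a b) *m x) y = dot x y + (x b 0 - x a 0) * (y a 0 - y b 0).
Proof.
move=> ab; rewrite -[LHS](subrK (dot x y)) addrC; congr (_ + _).
rewrite /dot -sumrB (bigD1 a) //= (bigD1 b) 1?eq_sym //= big1 ?addr0.
  by rewrite !perm_mx_mulE tpermL tpermR; ring.
by move=> k /andP [ka kb]; rewrite perm_mx_mulE tpermD 1?eq_sym //; ring.
Qed.

(* Swapping two entries of [S y] ordered against [y] keeps the penalty and does
   not increase the fit term, so by uniqueness of the minimiser no such pair exists. *)
Lemma Srho_inD (y : V) (s : {perm 'I_n}) :
  inD (perm_mx s *m y) -> inD (perm_mx s *m S y).
Proof.
move=> Dy i j ij; rewrite !perm_mx_mulE.
have := Dy i j ij; rewrite !perm_mx_mulE; set a := s i; set b := s j => yab.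
rewrite leNgt; apply/negP => Sab.
have ab : a != b by apply: contraTneq Sab => ->; rewrite ltxx.
have swap_le : Sobj rho y (perm_mx (tperm a b) *m S y) <= Sobj rho y (S y).
  rewrite !SobjE penalty_perm lerD2r ler_pM2l ?invr_gt0 ?ltr0n //.
  rewrite !dotBl !dotBr dot_perm (dotC y) dot_tperm // (dotC y (S y)).
  have : 0 <= (S y b 0 - S y a 0) * (y a 0 - y b 0) by apply: mulr_ge0; lra.
  lra.
move/matrixP: (Srho_uniq swap_le) => /(_ a 0).
by rewrite perm_mx_mulE tpermL => Sab_eq; move: Sab; rewrite Sab_eq ltxx.
Qed.

Variable proj : V -> V.
Hypothesis projP : is_projD proj.

Lemma Sobj_inD (y x : V) (s : {perm 'I_n}) : inD x ->
  Sobj rho y ((perm_mx s)^T *m x) =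
  2^-1 * dot (x - perm_mx s *m y) (x - perm_mx s *m y) + rho * dot (wvec R n) x.
Proof.
move=> Dx; rewrite SobjE -(dot_perm s) mulmxBr perm_mx_mul_trK.
by rewrite tr_perm_mx penalty_perm penalty_inD.
Qed.

(* On the sorted side [Sobj rho y] is [|x - (P y - rho w)|^2 / 2] up to a
   constant, which [proj] minimises over D. *)
Theorem Srho_projD (y : V) (s : {perm 'I_n}) : inD (perm_mx s *m y) ->
  S y = (perm_mx s)^T *m proj (perm_mx s *m y - rho *: wvec R n).
Proof.
move=> Dy; symmetry; apply: Srho_uniq.
set v := perm_mx s *m y - rho *: wvec R n.
have [DSy Dpv] := (Srho_inD Dy, projD_inD projP v).
rewrite -[S y](tr_perm_mx_mulK s) !Sobj_inD //.
have := (projP v).2 _ DSy; rewrite !sqnormE.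
have subvE x : x - v = (x - perm_mx s *m y) + rho *: wvec R n.
  by rewrite /v opprB addrA addrAC.
rewrite !subvE; move: (proj v) (perm_mx s *m S y) (perm_mx s *m y) (wvec R n) => Z X Y w.
rewrite !dotDl !dotDr ?dotNl ?dotNr !dotZl !dotZr ?dotNl ?dotNr.
rewrite !(dotC Y X) !(dotC Y Z) !(dotC w X) !(dotC w Z) !(dotC w Y).
lra.
Qed.

End Srho.

Section Sorting.
Variables (R : realFieldType) (n : nat).
Local Notation V := 'cV[R]_n.

Definition count_gt (x : V) (c : R) : nat := (\sum_(b < n) nat_of_bool (c < x b 0)%R)%N.

Lemma count_gt_perm (s : {perm 'I_n}) (x : V) c : count_gt (perm_mx s *m x) c = count_gt x c.
Proof.
rewrite /count_gt (reindex_inj (@perm_inj _ s^-1)) /=; apply: eq_bigr => i _.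
by rewrite perm_mx_mulE permKV.
Qed.

(* If [(P z)_a > z_a] then at least [a + 1] entries of [P z], but at most [a]
   entries of [z], exceed [z_a]. *)
Lemma inD_perm_le (z : V) (s : {perm 'I_n}) :
  inD z -> inD (perm_mx s *m z) -> forall a, (perm_mx s *m z) a 0 <= z a 0.
Proof.
move=> Dz Dz' a; rewrite leNgt; apply/negP => za_lt.
have : (count_gt z (z a 0%R) <= a)%N.
  rewrite /count_gt -[X in (_ <= X)%N](minn_idPr (ltnW (ltn_ord a))) -sum_ltn_l.
  apply: leq_sum => b _; case: ltP => //= zab.
  by case: (ltnP b a) => // ab; have := Dz a b ab; lra.
have : (a.+1 <= count_gt (perm_mx s *m z) (z a 0%R))%N.
  rewrite /count_gt -[X in (X <= _)%N](minn_idPr (ltn_ord a)) -sum_ltn_l.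
  apply: leq_sum => b _; case: (ltnP b a.+1) => //= ba.
  by have := Dz' b a ba; case: ltP => //; lra.
rewrite count_gt_perm; lia.
Qed.

Lemma inD_perm_eq (z : V) (s : {perm 'I_n}) :
  inD z -> inD (perm_mx s *m z) -> perm_mx s *m z = z.
Proof.
move=> Dz Dz'; apply/matrixP => a j; rewrite (ord1 j); apply/eqP.
rewrite eq_le inD_perm_le //=.
have zE : z = perm_mx s^-1 *m (perm_mx s *m z).
  by rewrite mulmxA -perm_mxM mulVg perm_mx1 mul1mx.
by rewrite {1}zE; apply: inD_perm_le; rewrite -?zE.
Qed.

Lemma inD_perm_uniq (y : V) (s1 s2 : {perm 'I_n}) :
  inD (perm_mx s1 *m y) -> inD (perm_mx s2 *m y) -> perm_mx s2 *m y = perm_mx s1 *m y.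
Proof.
move=> D1 D2.
have yE : perm_mx s2 *m y = perm_mx (s2 * s1^-1) *m (perm_mx s1 *m y).
  by rewrite mulmxA -perm_mxM -mulgA mulVg mulg1.
by rewrite yE inD_perm_eq // -yE.
Qed.

(* Closer to [y] than half its smallest nonzero gap, [u] is ordered like [y]. *)
Lemma inD_perm_nbhs (y : V) : exists2 e : R, 0 < e & forall u : V,
  (forall i, `|u i 0 - y i 0| < e) ->
  forall s, inD (perm_mx s *m u) -> inD (perm_mx s *m y).
Proof.
have [m m_gt0 mP] := nonzero_norm_lbound (fun ab : 'I_n * 'I_n => y ab.1 0 - y ab.2 0).
exists (m / 2) => [|u close s Du i j ij]; first by rewrite divr_gt0.
rewrite !perm_mx_mulE leNgt; apply/negP => yij.
have := mP (s j, s i); rewrite /= subr_eq0 gt_eqF // gtr0_norm ?subr_gt0 // => /(_ isT).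
have := Du i j ij; rewrite !perm_mx_mulE.
have := close (s i); have := close (s j); rewrite !ltr_norml => /andP [? ?] /andP [? ?].
lra.
Qed.

End Sorting.

Section Ties.
Variables (R : realFieldType) (n : nat).
Local Notation V := 'cV[R]_n.
Variable proj : V -> V.
Hypothesis projP : is_projD proj.
Variables (rho : R) (z : V).
Hypothesis rho_gt0 : 0 < rho.
Hypothesis Dz : inD z.
Let v : V := z - rho *: wvec R n.

Lemma lam_at_multD_le0 (x : V) k : lam_at (multD proj x) k <= 0.
Proof. by apply: sumr_le0 => i _; exact: multD_le0. Qed.

(* [v] increases by [2 rho] across a tie of [z], while a zero multiplier there
   would give [v_(i+1) <= proj v_(i+1) <= proj v_i <= v_i]. *)
Lemma multD_tie_neq0 (i : 'I_(n.-1)) :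
  z (idx_lo i) 0 = z (idx_hi i) 0 -> multD proj v i 0 != 0.
Proof.
move=> tie; apply/negP => /eqP lam0.
have subE (j : 'I_n) :
    v j 0 - proj v j 0 = lam_at (multD proj v) j - lam_prev (multD proj v) j.
  by rewrite -trBmat_mulE trBmat_multD // !mxE.
have loE : v (idx_lo i) 0 - proj v (idx_lo i) 0 = - lam_prev (multD proj v) i.
  by rewrite subE -[nat_of_ord (idx_lo i)]/(nat_of_ord i) lam_atE lam0 sub0r.
have hiE : v (idx_hi i) 0 - proj v (idx_hi i) 0 = lam_at (multD proj v) i.+1.
  by rewrite subE -[nat_of_ord (idx_hi i)]/(i.+1) /= lam_atE lam0 subr0.
have : lam_prev (multD proj v) i <= 0.
  by rewrite /lam_prev; case: (nat_of_ord i) => // k; exact: lam_at_multD_le0.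
have := lam_at_multD_le0 v i.+1.
have : proj v (idx_hi i) 0 <= proj v (idx_lo i) 0 by apply: projD_inD => /=.
have : v (idx_hi i) 0 - v (idx_lo i) 0 = 2 * rho.
  by rewrite /v !mxE tie /= -[(i.+1)%:R]natr1; ring.
have := rho_gt0; lra.
Qed.

Lemma tie_in_KD (K : {set 'I_(n.-1)}) i : KD proj v K ->
  z (idx_lo i) 0 = z (idx_hi i) 0 -> i \in K.
Proof.
move=> /KD_facts[// supp_sub _ _] tie.
by apply: (subsetP supp_sub); rewrite inE multD_tie_neq0.
Qed.

Lemma ker_BK_const_on_ties (K : {set 'I_(n.-1)}) (x : V) :
  KD proj v K -> BK R K *m x = 0 ->
  forall a b : 'I_n, z a 0 = z b 0 -> x a 0 = x b 0.
Proof.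
move=> KDK /eqP/BK_mul_eq0P Kx.
suff tieE d (a b : 'I_n) : (b : nat) = (a + d)%N -> z a 0 = z b 0 -> x a 0 = x b 0.
  move=> a b zab; case: (leqP a b) => ab; first by apply: (tieE (b - a)%N) => //; lia.
  by symmetry; apply: (tieE (a - b)%N); [lia | rewrite zab].
elim: d a b => [|d IH] a b bE zab.
  by congr (x _ 0); apply: val_inj; rewrite /= bE addn0.
have a_lt : (a < n.-1)%N by have := ltn_ord b; lia.
pose i : 'I_(n.-1) := Ordinal a_lt.
have loE : idx_lo i = a by apply: val_inj.
have hiE : (idx_hi i : nat) = a.+1 by [].
have : z (idx_hi i) 0 <= z a 0 by apply: Dz; rewrite hiE.
have : z b 0 <= z (idx_hi i) 0 by apply: Dz; rewrite hiE bE; lia.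
move=> z_b z_hi; have tie : z (idx_lo i) 0 = z (idx_hi i) 0 by rewrite loE; lra.
have := Kx i (tie_in_KD KDK tie); rewrite Bmat_mulE loE => /subr0_eq ->.
by apply: IH; [rewrite hiE bE; lia | lra].
Qed.

Lemma perm_mx_ker_BK (K : {set 'I_(n.-1)}) (s : {perm 'I_n}) (x : V) :
  KD proj v K -> BK R K *m x = 0 -> perm_mx s *m z = z -> perm_mx s *m x = x.
Proof.
move=> KDK Kx sz; apply/matrixP => a j; rewrite (ord1 j) perm_mx_mulE.
apply: (ker_BK_const_on_ties KDK Kx).
by move/matrixP: sz => /(_ a 0); rewrite perm_mx_mulE.
Qed.

Lemma perm_mx_QK (K : {set 'I_(n.-1)}) (s : {perm 'I_n}) :
  KD proj v K -> perm_mx s *m z = z -> perm_mx s *m QK R K = QK R K.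
Proof.
move=> KDK sz; have [_ _ freeK] := KD_facts KDK.
apply/matrixP => a j.
have Kcol : BK R K *m col j (QK R K) = 0 by rewrite colE mulmxA BK_QK // mul0mx.
have colE' (M : 'M[R]_n) : M a j = col j M a 0 by rewrite mxE.
rewrite colE' [RHS]colE' -(perm_mx_ker_BK KDK Kcol sz) !mxE.
by apply: eq_bigr => k _; rewrite !mxE.
Qed.

Lemma QK_perm_conj (K : {set 'I_(n.-1)}) (s : {perm 'I_n}) :
  KD proj v K -> perm_mx s *m z = z -> (perm_mx s)^T *m QK R K *m perm_mx s = QK R K.
Proof.
move=> KDK sz.
have sVz : perm_mx s^-1 *m z = z by rewrite -{1}sz mulmxA -perm_mxM mulVg perm_mx1 mul1mx.
rewrite tr_perm_mx perm_mx_QK //; apply: trmx_inj.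
by rewrite trmx_mul QK_sym tr_perm_mx perm_mx_QK.
Qed.

End Ties.

Lemma QK_conj_sorting (R : realFieldType) n (proj : 'cV[R]_n -> 'cV[R]_n) rho
    (y : 'cV[R]_n) (s1 s2 : {perm 'I_n}) (K : {set 'I_(n.-1)}) :
  is_projD proj -> 0 < rho -> inD (perm_mx s1 *m y) ->
  perm_mx s2 *m y = perm_mx s1 *m y ->
  KD proj (perm_mx s1 *m y - rho *: wvec R n) K ->
  (perm_mx s2)^T *m QK R K *m perm_mx s2 = (perm_mx s1)^T *m QK R K *m perm_mx s1.
Proof.
move=> projP rho_gt0 D1 s21 KDK.
have s2E : perm_mx s2 = perm_mx (s2 * s1^-1) *m perm_mx s1 :> 'M[R]_n.
  by rewrite -perm_mxM -mulgA mulVg mulg1.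
have fix_z : perm_mx (s2 * s1^-1) *m (perm_mx s1 *m y) = perm_mx s1 *m y.
  by rewrite mulmxA -s2E.
rewrite s2E trmx_mul -[in RHS](QK_perm_conj projP rho_gt0 D1 KDK fix_z).
by rewrite !mulmxA.
Qed.

Lemma mulmx_shift_subE (R : realFieldType) n (M : 'M[R]_n) (rho : R) (u y : 'cV[R]_n) :
  (M *m u - rho *: wvec R n) - (M *m y - rho *: wvec R n) = M *m (u - y).
Proof. by rewrite opprB subrKA mulmxBr. Qed.

Lemma perm_shift_entry_subE (R : realFieldType) n (s : {perm 'I_n}) (rho : R)
    (u y : 'cV[R]_n) j :
  (perm_mx s *m u - rho *: wvec R n) j 0 - (perm_mx s *m y - rho *: wvec R n) j 0 =
  u (s j) 0 - y (s j) 0.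
Proof. by rewrite -!row_permE !mxE opprB subrKA. Qed.

Lemma KD_perm_shift_nbhs (R : realFieldType) n (proj : 'cV[R]_n -> 'cV[R]_n) rho
    (y : 'cV[R]_n) (s0 : {perm 'I_n}) :
  is_projD proj ->
  exists2 c : R, 0 < c & forall (u : 'cV[R]_n) (s : {perm 'I_n}) K,
    (forall i, `|u i 0 - y i 0| < c) -> perm_mx s *m y = perm_mx s0 *m y ->
    KD proj (perm_mx s *m u - rho *: wvec R n) K ->
    KD proj (perm_mx s0 *m y - rho *: wvec R n) K.
Proof.
move=> projP; have [c c_gt0 KD_near] := KD_nbhs (perm_mx s0 *m y - rho *: wvec R n) projP.
exists c => // u s K close sy KDK; apply: KD_near KDK => j.
by rewrite -sy perm_shift_entry_subE close.
Qed.

Lemma Srho_sub_QK (R : realFieldType) n (proj S : 'cV[R]_n -> 'cV[R]_n) rho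
    (u y : 'cV[R]_n) (s : {perm 'I_n}) (K : {set 'I_(n.-1)}) :
  is_projD proj -> is_Srho rho S -> 0 < rho ->
  inD (perm_mx s *m u) -> inD (perm_mx s *m y) ->
  KD proj (perm_mx s *m u - rho *: wvec R n) K ->
  KD proj (perm_mx s *m y - rho *: wvec R n) K ->
  S u = S y + (perm_mx s)^T *m QK R K *m perm_mx s *m (u - y).
Proof.
move=> projP SP rho_gt0 Du Dy KDu KDy.
rewrite (Srho_projD SP rho_gt0 projP Du) (Srho_projD SP rho_gt0 projP Dy).
rewrite -[LHS](subrK ((perm_mx s)^T *m proj (perm_mx s *m y - rho *: wvec R n))).
rewrite addrC -mulmxBr; congr (_ + _).
by rewrite (projD_sub_QK projP KDu KDy) mulmx_shift_subE !mulmxA.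
Qed.

Theorem proposition2p8 (R : realFieldType) (n : nat)
  (proj : 'cV[R]_n -> 'cV[R]_n) (S : 'cV[R]_n -> 'cV[R]_n)
  (P : 'cV[R]_n -> 'M[R]_n) (rho : R) (y : 'cV[R]_n) :
  is_projD proj -> is_Srho rho S -> is_sorting_perm P -> 0 < rho ->
  exists2 e : R, 0 < e &
    forall u : 'cV[R]_n, (forall i, `|u i 0 - y i 0| < e) ->
      let vu := P y *m u - rho *: wvec R n in
      let vy := P y *m y - rho *: wvec R n in
      [/\ forall K, KD proj vu K -> KD proj vy K,
          forall Q, QD proj vu Q -> QD proj vy Q,
          forall Q, QS proj P rho u Q -> QS proj P rho y Q,
          forall Qh, QD proj vu Qh ->
            proj vu = proj vy + Qh *m P y *m (u - y)
        & forall Q, QS proj P rho u Q -> S u = S y + Q *m (u - y)].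
Proof.
move=> projP SP sortP rho_gt0.
have [/is_perm_mxP [sy Py] Dy] := sortP y; rewrite Py in Dy.
have [c c_gt0 KD_near] := KD_perm_shift_nbhs rho y sy projP.
have [e e_gt0 sorts_near] := inD_perm_nbhs y.
exists (Order.min c e) => [|u close vu vy]; first by rewrite lt_min c_gt0 e_gt0.
have [close_c close_e] : (forall i, `|u i 0 - y i 0| < c) /\ (forall i, `|u i 0 - y i 0| < e).
  by split=> i; have := close i; rewrite lt_min => /andP[].
have [/is_perm_mxP [su Pu] Du] := sortP u; rewrite Pu in Du.
have Dsuy := sorts_near u close_e su Du.
have suy := inD_perm_uniq Dy Dsuy.
have KDsu K := KD_near u su K close_c suy.
have KDsy K := KD_near u sy K close_c erefl.
rewrite /vu /vy Py; split.
- exact: KDsy.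
- by move=> Q [K [KDK ->]]; exists K; split=> //; exact: KDsy.
- move=> Q [Qh [[K [KDK ->]] ->]]; rewrite Pu in KDK *.
  exists (QK R K); split; first by rewrite Py; exists K; split=> //; exact: KDsu.
  by rewrite Py (QK_conj_sorting projP rho_gt0 Dy suy (KDsu K KDK)).
- move=> Qh [K [KDK ->]].
  by rewrite -mulmxA -(mulmx_shift_subE _ rho) -(projD_sub_QK projP KDK (KDsy K KDK)) subrKC.
- move=> Q [Qh [[K [KDK ->]] ->]]; rewrite Pu in KDK *.
  by apply: Srho_sub_QK => //; rewrite suy; exact: KDsu.
Qed.
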